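(* The irreducible polynomials over the tropical hyperfield $\mathbb T$ are precisely the polynomials of degree $1$, and the set of polynomials over $\mathbb T$ has the unique factorization property.
   Context: The tropical hyperfield $\mathbb T$ is the set $\mathbb R_{\ge0}$ with usual multiplication and hyperaddition $a\boxplus b=\{\max\{a,b\}\}$ if $a\ne b$ and $a\boxplus a=[0,a]$; equivalently $c\in a\boxplus b$ iff the maximum of $a,b,c$ is attained at least twice. Here $-a=a$. Iterated sums: $\boxplus_{i=1}^n a_i=\bigcup_{b\in\boxplus_{i=1}^{n-1}a_i} b\boxplus a_n$. A polynomial over $\mathbb T$ is a finitely supported sequence $(c_i)$ in $\mathbb T$, written $\sum c_iT^i$, with degree the largest $k$ with $c_k\ne0$. Hyperproduct: $p\boxdot q=\{\sum e_iT^i : e_i\in \boxplus_{k+l=i} c_kd_l\}$ for $p=\sum c_iT^i,q=\sum d_iT^i$, and $\boxdot_{i=1}^n q_i=\bigcup_{r\in\boxdot_{i=1}^{n-1}q_i} r\boxdot q_n$. $p\sim q$ means $p\in a\boxdot q$ for some $a\neq0$. $p$ is irreducible if $\deg p\ge1$ and $p\in q_1\boxdot q_2$ implies $p\sim q_1$ or $p\sim q_2$. The unique factorization property: whenever $p\in q_1\boxdot\cdots\boxdot q_n$ and $p\in q'_1\boxdot\cdots\boxdot q'_m$ with all factors irreducible, then $n=m$ and $q_i\sim q'_{\sigma(i)}$ for some permutation $\sigma$. *)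

From Stdlib Require Import Reals List Permutation.
Open Scope R_scope.

Definition inT (a : R) : Prop := 0 <= a.

(* c \in a [+] b  iff  c \in T and the maximum of a, b, c is attained at
   least twice. *)
Definition hadd (a b c : R) : Prop :=
  inT c /\
  ((a = b /\ c <= a) \/ (a = c /\ b <= a) \/ (b = c /\ a <= b)).

Fixpoint hsum (f : nat -> R) (n : nat) (c : R) : Prop :=
  match n with
  | O => c = f O
  | S m => exists b, hsum f m b /\ hadd b (f (S m)) c
  end.

Definition is_poly (p : nat -> R) : Prop :=
  (forall i, inT (p i)) /\ exists N, forall i, (N <= i)%nat -> p i = 0.

Definition has_deg (p : nat -> R) (d : nat) : Prop :=
  p d <> 0 /\ forall k, (d < k)%nat -> p k = 0.

Definition deg_ge1 (p : nat -> R) : Prop :=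
  exists k, (1 <= k)%nat /\ p k <> 0.

Definition hprod (p q r : nat -> R) : Prop :=
  is_poly r /\ forall i, hsum (fun k => p k * q (i - k)%nat) i (r i).

(* Iterated hyperproduct over a list given in REVERSED order:
   hprod_rev [q_n; ...; q_1] r  iff  r \in q_1 [.] ... [.] q_n,
   where [.]_{i=1}^1 = {q_1} and
   [.]_{i=1}^n = U_{s in [.]_{i=1}^{n-1}} s [.] q_n. *)
Fixpoint hprod_rev (qs : list (nat -> R)) (r : nat -> R) : Prop :=
  match qs with
  | nil => False
  | q :: nil => forall i, r i = q i
  | q :: qs' => exists s, hprod_rev qs' s /\ hprod s q r
  end.

Definition hprodn (qs : list (nat -> R)) (r : nat -> R) : Prop :=
  hprod_rev (rev qs) r.

Definition constp (a : R) : nat -> R :=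
  fun i => match i with O => a | S _ => 0 end.

Definition assoc (p q : nat -> R) : Prop :=
  exists a, inT a /\ a <> 0 /\ hprod (constp a) q p.

Definition irreducible (p : nat -> R) : Prop :=
  is_poly p /\ deg_ge1 p /\
  forall q1 q2, is_poly q1 -> is_poly q2 -> hprod q1 q2 p ->
    assoc p q1 \/ assoc p q2.

Definition unique_factorization : Prop :=
  forall (p : nat -> R) (qs qs' : list (nat -> R)),
    is_poly p ->
    qs <> nil -> qs' <> nil ->
    Forall irreducible qs -> Forall irreducible qs' ->
    hprodn qs p -> hprodn qs' p ->
    length qs = length qs' /\
    exists qs'', Permutation qs' qs'' /\ Forall2 assoc qs qs''.

From Stdlib Require Import Reals List Permutation Lra Lia.
Open Scope R_scope.

(* The key notion is the dominant index of a nonnegative sequence p: the index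
   k where p attains its maximum, with ties broken towards the largest
   ('up = true') or the smallest ('up = false') index.  In a hyperproduct the
   dominant indices of the two factors add up (conv_top), because the maximum
   of a hypersum is attained only where a single term dominates.  Monotone
   maps compatible with degrees ("gradings") preserve hyperproducts; the
   support grading turns the dominant index into the degree (or the lowest
   nonzero index), and the twist c_i |-> x^i c_i turns it into the position
   of the largest monomial at the point x.

   For a linear factor q with tropical root q_0 / q_1 these indices only
   record whether the root is <= x or < x.  Hence, in a product of linear
   factors, the number of factors with root x can be read off from the
   product for every x >= 0, so the multiset of roots, and with it the list
   of factors up to association, is unique.  Conversely every polynomial of
   degree d >= 1 has a linear factor: an intermediate value argument yields
   a tropical root c, and synthetic division by T + c gives the cofactor.
   Thus irreducibles have degree 1, while polynomials of degree 1 are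
   irreducible since degrees add in hyperproducts. *)

Lemma hsum_below f n c : hsum f n c -> exists j, (j <= n)%nat /\ c <= f j.
Proof.
  revert c; induction n as [|n IH]; simpl; intros c H.
  - exists 0%nat; split; [lia | subst; lra].
  - destruct H as [b [Hb [_ Hadd]]].
    destruct (IH b Hb) as [j [Hj Hbj]].
    destruct (Rle_dec c b).
    + exists j; split; [lia | lra].
    + exists (S n); split; [lia | lra].
Qed.

Lemma hsum_nonneg f n c : (forall j, (j <= n)%nat -> 0 <= f j) -> hsum f n c -> 0 <= c.
Proof.
  destruct n as [|n]; simpl; intros Hf H.
  - subst; apply Hf; lia.
  - destruct H as [b [_ [Hc _]]]; exact Hc.
Qed.

Lemma hsum_strict_max f n c j : (j <= n)%nat ->
  (forall k, (k <= n)%nat -> k <> j -> f k < f j) -> hsum f n c -> c = f j.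
Proof.
  revert c; induction n as [|n IH]; simpl; intros c Hj Hf H.
  - subst; f_equal; lia.
  - destruct H as [b [Hb [_ Hadd]]].
    destruct (Nat.eq_dec j (S n)) as [->|Hne].
    + destruct (hsum_below f n b Hb) as [k [Hk Hbk]].
      assert (f k < f (S n)) by (apply Hf; lia). lra.
    + assert (b = f j) by (apply IH; [lia | intros; apply Hf; lia | exact Hb]).
      assert (f (S n) < f j) by (apply Hf; lia). lra.
Qed.

Lemma hsum_single f n c j : (j <= n)%nat -> 0 <= f j ->
  (forall k, (k <= n)%nat -> k <> j -> f k = 0) -> hsum f n c -> c = f j.
Proof.
  intros Hj Hfj Hf H. destruct (Req_dec_T (f j) 0) as [E|E].
  - destruct (hsum_below f n c H) as [k [Hk Hck]].
    assert (Hk0 : f k = 0) by (destruct (Nat.eq_dec k j); subst; auto).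
    assert (0 <= c).
    { apply (hsum_nonneg f n); auto.
      intros i Hi; destruct (Nat.eq_dec i j); subst; [lra | rewrite Hf; auto; lra]. }
    lra.
  - apply (hsum_strict_max f n); auto.
    intros k Hk Hkj; rewrite Hf; auto; lra.
Qed.

Lemma hsum_ext f g n c : (forall j, (j <= n)%nat -> f j = g j) -> hsum f n c -> hsum g n c.
Proof.
  revert c; induction n as [|n IH]; simpl; intros c E H.
  - rewrite H; apply E; lia.
  - destruct H as [b [Hb Hadd]]. exists b; split.
    + apply IH; auto.
    + rewrite <- E; auto.
Qed.

Lemma hsum_pad f m n c : (m <= n)%nat -> 0 <= c ->
  (forall j, (m < j <= n)%nat -> f j = 0) -> hsum f m c -> hsum f n c.
Proof.
  intros Hmn Hc Hf H. induction n as [|n IH].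
  - replace m with 0%nat in H by lia; exact H.
  - destruct (Nat.eq_dec m (S n)) as [<-|Hne]; auto.
    exists c; split.
    + apply IH; [lia | intros; apply Hf; lia].
    + rewrite (Hf (S n)) by lia. unfold hadd, inT; lra.
Qed.

Lemma hadd_mono (phi : R -> R) a b c :
  (forall u v, u <= v -> phi u <= phi v) -> (forall u, 0 <= u -> 0 <= phi u) ->
  hadd a b c -> hadd (phi a) (phi b) (phi c).
Proof.
  intros Hmono Hpos [Hc H]. split; [apply Hpos, Hc|].
  destruct H as [[-> H]|[[-> H]|[-> H]]]; apply Hmono in H; auto.
Qed.

Lemma hsum_mono (phi : R -> R) f n c :
  (forall u v, u <= v -> phi u <= phi v) -> (forall u, 0 <= u -> 0 <= phi u) ->
  hsum f n c -> hsum (fun j => phi (f j)) n (phi c).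
Proof.
  intros Hmono Hpos; revert c; induction n as [|n IH]; simpl; intros c H.
  - now rewrite H.
  - destruct H as [b [Hb Hadd]]. exists (phi b); split; auto.
    apply hadd_mono; auto.
Qed.

Definition nneg (p : nat -> R) : Prop := forall i, 0 <= p i.

Definition conv (s q r : nat -> R) : Prop :=
  forall i, hsum (fun k => s k * q (i - k)%nat) i (r i).

Lemma poly_nneg p : is_poly p -> nneg p.
Proof. intros [H _] i; apply H. Qed.

Lemma hprod_conv s q r : hprod s q r -> conv s q r.
Proof. intros [_ H]; exact H. Qed.

Definition beyond (up : bool) (k j : nat) : Prop := if up then (k < j)%nat else (j < k)%nat.

Definition top (up : bool) (p : nat -> R) (k : nat) : Prop :=
  0 < p k /\ (forall j, p j <= p k) /\ (forall j, beyond up k j -> p j < p k).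

Lemma top_unique up p k1 k2 : top up p k1 -> top up p k2 -> k1 = k2.
Proof.
  intros [_ [A1 B1]] [_ [A2 B2]].
  destruct (Nat.lt_total k1 k2) as [h|[h|h]]; auto; exfalso; destruct up.
  - specialize (B1 _ h); specialize (A2 k1); lra.
  - specialize (B2 _ h); specialize (A1 k2); lra.
  - specialize (B2 _ h); specialize (A1 k2); lra.
  - specialize (B1 _ h); specialize (A2 k1); lra.
Qed.

Lemma top_ext up p p' k : (forall i, p i = p' i) -> top up p k -> top up p' k.
Proof.
  intros E [A [B C]]. unfold top; rewrite <- !E.
  split; [|split]; intros; rewrite <- ?E; auto.
Qed.

Lemma beyond_split up j0 l0 i j : (j <= i)%nat ->
  beyond up (j0 + l0) i \/ (i = j0 + l0 /\ j <> j0)%nat ->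
  beyond up j0 j \/ beyond up l0 (i - j).
Proof. destruct up; simpl; lia. Qed.

Lemma mul_lt_of a b A B : 0 <= a -> 0 <= b -> a <= A -> b <= B -> 0 < A -> 0 < B ->
  a < A \/ b < B -> a * b < A * B.
Proof. intros Ha Hb HA HB PA PB [H|H]; nra. Qed.

Lemma conv_top up s q r j0 l0 : nneg s -> nneg q -> conv s q r ->
  top up s j0 -> top up q l0 -> top up r (j0 + l0).
Proof.
  intros Hs Hq H [Sp [Sle Slt]] [Qp [Qle Qlt]].
  set (M := s j0 * q l0).
  assert (Hle : forall i j, s j * q (i - j)%nat <= M).
  { intros i j. apply Rmult_le_compat; auto. }
  assert (Hlt : forall i j, beyond up j0 j \/ beyond up l0 (i - j) -> s j * q (i - j)%nat < M).
  { intros i j Hb. apply mul_lt_of; auto.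
    destruct Hb as [Hb|Hb]; [left; apply Slt | right; apply Qlt]; exact Hb. }
  assert (Hmax : r (j0 + l0)%nat = M).
  { assert (E : M = s j0 * q (j0 + l0 - j0)%nat).
    { unfold M; replace (j0 + l0 - j0)%nat with l0 by lia; reflexivity. }
    rewrite E; apply (hsum_strict_max (fun k => s k * q (j0 + l0 - k)%nat) (j0 + l0) _ j0);
      [lia | | apply H].
    intros k Hk Hkj; rewrite <- E; apply Hlt, beyond_split; auto. }
  unfold top; rewrite Hmax. split; [|split].
  - unfold M; apply Rmult_lt_0_compat; auto.
  - intro i. destruct (hsum_below _ _ _ (H i)) as [j [_ Hj]].
    eapply Rle_trans; [exact Hj | apply Hle].
  - intros i Hi. destruct (hsum_below _ _ _ (H i)) as [j [Hji Hj]].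
    eapply Rle_lt_trans; [exact Hj | apply Hlt, beyond_split; auto].
Qed.

Lemma is_poly_ext p p' : (forall i, p' i = p i) -> is_poly p -> is_poly p'.
Proof.
  intros E [H [N HN]]. split; [intro i; rewrite E; apply H|].
  exists N; intros i Hi; rewrite E; auto.
Qed.

Definition graded (phi : nat -> R -> R) (p : nat -> R) (i : nat) : R := phi i (p i).

Section Grading.
Variable phi : nat -> R -> R.
Hypothesis phi_mono : forall i u v, u <= v -> phi i u <= phi i v.
Hypothesis phi_nonneg : forall i u, 0 <= u -> 0 <= phi i u.
Hypothesis phi_mul :
  forall j l a b, 0 <= a -> 0 <= b -> phi (j + l)%nat (a * b) = phi j a * phi l b.

Lemma graded_nneg p : nneg p -> nneg (graded phi p).
Proof. intros H i; apply phi_nonneg, H. Qed.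

Lemma conv_graded s q r : nneg s -> nneg q -> conv s q r ->
  conv (graded phi s) (graded phi q) (graded phi r).
Proof.
  intros Hs Hq H i. unfold graded.
  apply (hsum_ext (fun k => phi i (s k * q (i - k)%nat))).
  - intros k Hk. rewrite <- phi_mul by auto. f_equal; lia.
  - apply hsum_mono; auto.
Qed.

Lemma hprod_rev_top up (e : (nat -> R) -> nat) l r :
  (forall q, In q l -> is_poly q /\ top up (graded phi q) (e q)) ->
  hprod_rev l r -> is_poly r /\ top up (graded phi r) (list_sum (map e l)).
Proof.
  revert r; induction l as [|q l IH]; intros r Hl H; [destruct H|].
  destruct (Hl q (or_introl eq_refl)) as [Pq Tq].
  destruct l as [|a l'].
  - simpl in H |- *. rewrite Nat.add_0_r. split.
    + exact (is_poly_ext q r H Pq).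
    + apply (top_ext up (graded phi q)); auto.
      intro i; unfold graded; rewrite H; reflexivity.
  - destruct H as [s [Hs Hsq]].
    destruct (IH s) as [Ps Ts]; [intros; apply Hl; right; auto | exact Hs |].
    split; [apply Hsq|].
    replace (list_sum (map e (q :: a :: l'))) with (list_sum (map e (a :: l')) + e q)%nat
      by (simpl; lia).
    apply (conv_top up (graded phi s) (graded phi q)); auto using graded_nneg, poly_nneg.
    apply conv_graded; auto using poly_nneg, hprod_conv.
Qed.

Lemma hprodn_top up (e : (nat -> R) -> nat) l r :
  (forall q, In q l -> is_poly q /\ top up (graded phi q) (e q)) ->
  hprodn l r -> top up (graded phi r) (list_sum (map e l)).
Proof.
  intros Hl H. rewrite (Permutation_list_sum (Permutation_map e (Permutation_rev l))).
  apply (hprod_rev_top up e (rev l) r); auto.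
  intros q Hq; apply Hl, in_rev, Hq.
Qed.

End Grading.

Definition twist (x : R) (i : nat) (u : R) : R := x ^ i * u.

Lemma twist_mono x i u v : 0 <= x -> u <= v -> twist x i u <= twist x i v.
Proof. intros Hx H; apply Rmult_le_compat_l; auto using pow_le. Qed.

Lemma twist_nonneg x i u : 0 <= x -> 0 <= u -> 0 <= twist x i u.
Proof. intros Hx H; apply Rmult_le_pos; auto using pow_le. Qed.

Lemma twist_mul x j l a b : twist x (j + l) (a * b) = twist x j a * twist x l b.
Proof. unfold twist; rewrite pow_add; ring. Qed.

Definition support (i : nat) (u : R) : R := if Rle_dec u 0 then 0 else 1.

Lemma support_mono i u v : u <= v -> support i u <= support i v.
Proof. unfold support; intros; repeat destruct Rle_dec; lra. Qed.

Lemma support_nonneg i u : 0 <= support i u.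
Proof. unfold support; destruct Rle_dec; lra. Qed.

Lemma support_mul j l a b : 0 <= a -> 0 <= b -> support (j + l) (a * b) = support j a * support l b.
Proof.
  unfold support; intros Ha Hb.
  destruct (Rle_dec a 0), (Rle_dec b 0), (Rle_dec (a * b) 0); try ring; exfalso; nra.
Qed.

Lemma has_deg_top p d : nneg p -> (has_deg p d <-> top true (graded support p) d).
Proof.
  intros Hp. unfold has_deg, top, graded, support; simpl. split.
  - intros [Hd Hz]. assert (0 < p d) by (specialize (Hp d); lra).
    destruct (Rle_dec (p d) 0); [lra|]. split; [lra|split].
    + intro j; destruct Rle_dec; lra.
    + intros j Hj; rewrite Hz by exact Hj; destruct Rle_dec; lra.
  - intros [Hd [_ Hz]]. destruct (Rle_dec (p d) 0); [lra|]. split; [lra|].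
    intros k Hk; specialize (Hz k Hk); specialize (Hp k).
    destruct (Rle_dec (p k) 0); lra.
Qed.

Lemma conv_deg s q r d1 d2 : nneg s -> nneg q -> nneg r -> conv s q r ->
  has_deg s d1 -> has_deg q d2 -> has_deg r (d1 + d2).
Proof.
  intros Hs Hq Hr H Ds Dq. apply has_deg_top; auto.
  apply has_deg_top in Ds, Dq; auto.
  apply (conv_top true (graded support s) (graded support q)); auto using graded_nneg.
  - intros i; apply support_nonneg.
  - intros i; apply support_nonneg.
  - apply conv_graded; auto using support_mono, support_nonneg, support_mul.
Qed.

Lemma deg_unique p d1 d2 : has_deg p d1 -> has_deg p d2 -> d1 = d2.
Proof.
  intros [H1 Z1] [H2 Z2].
  destruct (Nat.lt_total d1 d2) as [h|[h|h]]; auto; exfalso; [apply H2 | apply H1]; auto.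
Qed.

Lemma zero_or_deg p : is_poly p -> (forall k, p k = 0) \/ exists d, has_deg p d.
Proof.
  intros [_ [N HN]]. induction N as [|N IH].
  - left; intro k; apply HN; lia.
  - destruct (Req_dec_T (p N) 0) as [E|E].
    + apply IH. intros i Hi; destruct (Nat.eq_dec i N) as [->|]; [exact E | apply HN; lia].
    + right; exists N; split; [exact E | intros k Hk; apply HN; exact Hk].
Qed.

Lemma conv_zero s q r : (forall k l, s k * q l = 0) -> conv s q r -> forall i, r i = 0.
Proof.
  intros Z H i. specialize (H i).
  apply (hsum_single _ _ _ 0) in H; [rewrite H; apply Z | lia | rewrite Z; lra | intros; apply Z].
Qed.

Lemma conv_const_l s q r : nneg s -> nneg q -> (forall k, (1 <= k)%nat -> s k = 0) ->
  conv s q r -> forall i, r i = s 0%nat * q i.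
Proof.
  intros Hs Hq Z H i. specialize (H i).
  apply (hsum_single _ _ _ 0) in H; [| lia | apply Rmult_le_pos; auto |].
  - now rewrite H, Nat.sub_0_r.
  - intros k Hk Hk0; rewrite Z by lia; ring.
Qed.

Lemma conv_const_r s q r : nneg s -> nneg q -> (forall k, (1 <= k)%nat -> q k = 0) ->
  conv s q r -> forall i, r i = s i * q 0%nat.
Proof.
  intros Hs Hq Z H i. specialize (H i).
  apply (hsum_single _ _ _ i) in H; [| lia | apply Rmult_le_pos; auto |].
  - now rewrite H, Nat.sub_diag.
  - intros k Hk Hki; rewrite (Z (i - k)%nat) by lia; ring.
Qed.

Lemma hprod_const a q p : 0 <= a -> is_poly p -> (forall i, p i = a * q i) ->
  hprod (constp a) q p.
Proof.
  intros Ha Hp E. split; auto. intro i.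
  apply (hsum_pad _ 0); [lia | apply (poly_nneg p Hp) | |].
  - intros [|j] Hj; [lia | simpl; ring].
  - simpl; rewrite Nat.sub_0_r; auto.
Qed.

Lemma assoc_deg p q d : is_poly q -> assoc p q -> has_deg q d -> has_deg p d.
Proof.
  intros Hq [a [Ha [Ha0 H]]] [Hd Z].
  assert (Ha' : nneg (constp a)) by (intros [|k]; simpl; [exact Ha | lra]).
  assert (Z' : forall k, (1 <= k)%nat -> constp a k = 0) by (intros [|k] Hk; [lia | reflexivity]).
  assert (E := conv_const_l _ _ _ Ha' (poly_nneg q Hq) Z' (hprod_conv _ _ _ H)).
  simpl in E. split.
  - rewrite E; intro E0; apply Rmult_integral in E0; tauto.
  - intros k Hk; rewrite E, Z by exact Hk; ring.
Qed.

Definition linear (q : nat -> R) : Prop := is_poly q /\ has_deg q 1.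

Definition root (q : nat -> R) : R := q 0%nat / q 1%nat.

Lemma linear_facts q : linear q ->
  nneg q /\ 0 < q 1%nat /\ (forall k, (2 <= k)%nat -> q k = 0) /\
  q 0%nat = root q * q 1%nat /\ 0 <= root q.
Proof.
  intros [Hp [H1 Z]]. assert (Hn := poly_nneg q Hp).
  assert (P1 : 0 < q 1%nat) by (specialize (Hn 1%nat); lra).
  split; [exact Hn | split; [exact P1 | split; [|split]]].
  - intros k Hk; apply Z; lia.
  - unfold root; field; lra.
  - unfold root; apply Rmult_le_pos; [apply Hn | apply Rlt_le, Rinv_0_lt_compat, P1].
Qed.

Definition tie (up : bool) (a b : R) : nat :=
  if up then (if Rle_dec a b then 1%nat else 0%nat)
  else (if Rlt_dec a b then 1%nat else 0%nat).

Lemma tie_scale up a b c : 0 < c -> tie up (a * c) (b * c) = tie up a b.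
Proof.
  intros Hc; unfold tie; destruct up.
  - destruct (Rle_dec (a * c) (b * c)), (Rle_dec a b); auto; exfalso; nra.
  - destruct (Rlt_dec (a * c) (b * c)), (Rlt_dec a b); auto; exfalso; nra.
Qed.

Lemma top_two_term up p : nneg p -> 0 < p 1%nat -> (forall k, (2 <= k)%nat -> p k = 0) ->
  top up p (tie up (p 0%nat) (p 1%nat)).
Proof.
  intros Hn H1 Z. assert (H0 := Hn 0%nat).
  assert (Zj : forall j, p (S (S j)) = 0) by (intro j; apply Z; lia).
  unfold top, tie, beyond; destruct up;
    [destruct (Rle_dec (p 0%nat) (p 1%nat)) | destruct (Rlt_dec (p 0%nat) (p 1%nat))];
    (split; [lra | split]); intros [|[|j]]; rewrite ?Zj; intros; lra || lia.
Qed.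

Lemma linear_twist_top up x q : linear q -> 0 < x ->
  top up (graded (twist x) q) (tie up (root q) x).
Proof.
  intros Hq Hx. destruct (linear_facts q Hq) as [Hn [P1 [Z [E _]]]].
  replace (tie up (root q) x) with (tie up (graded (twist x) q 0%nat) (graded (twist x) q 1%nat)).
  - apply top_two_term.
    + intro i; apply twist_nonneg; [lra | apply Hn].
    + unfold graded, twist; simpl; nra.
    + intros k Hk; unfold graded, twist; rewrite Z by exact Hk; ring.
  - unfold graded, twist; simpl. rewrite E, Rmult_1_l, Rmult_1_r. apply tie_scale, P1.
Qed.

Lemma linear_support_top q : linear q -> top false (graded support q) (tie true (root q) 0).
Proof.
  intros Hq. destruct (linear_facts q Hq) as [Hn [P1 [Z [E R0]]]].
  replace (tie true (root q) 0) with (tie false (graded support q 0%nat) (graded support q 1%nat)).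
  - apply top_two_term.
    + intro i; apply support_nonneg.
    + unfold graded, support; destruct Rle_dec; lra.
    + intros k Hk; unfold graded, support; rewrite Z by exact Hk; destruct Rle_dec; lra.
  - unfold graded, support, tie.
    destruct (Rle_dec (q 1%nat) 0); [lra|].
    destruct (Rle_dec (root q) 0), (Rle_dec (q 0%nat) 0), Rlt_dec; auto; exfalso; nra.
Qed.

Definition nb (up : bool) (x : R) (l : list (nat -> R)) : nat :=
  list_sum (map (fun q => tie up (root q) x) l).

Lemma nb_cons up x q l : nb up x (q :: l) = (tie up (root q) x + nb up x l)%nat.
Proof. reflexivity. Qed.

Lemma factorization_tops l r : Forall linear l -> hprodn l r ->
  (forall up x, 0 < x -> top up (graded (twist x) r) (nb up x l)) /\
  top false (graded support r) (nb true 0 l).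
Proof.
  rewrite Forall_forall; intros Hl H. split.
  - intros up x Hx. apply (hprodn_top (twist x)); auto.
    + intros i u v; apply twist_mono; lra.
    + intros i u; apply twist_nonneg; lra.
    + intros; apply twist_mul.
    + intros q Hq; split; [apply Hl, Hq | apply linear_twist_top; auto].
  - apply (hprodn_top support); auto using support_mono, support_nonneg, support_mul.
    intros q Hq; split; [apply Hl, Hq | apply linear_support_top; auto].
Qed.

Lemma nb_split x l : nb true x l = (nb false x l + count_occ Req_dec_T (map root l) x)%nat.
Proof.
  induction l as [|q l IH]; auto. rewrite !nb_cons, IH; simpl; unfold tie.
  destruct (Rle_dec (root q) x), (Rlt_dec (root q) x), (Req_dec_T (root q) x); lia || lra.
Qed.

(* Roots are nonnegative. *)
Lemma nb_nonpos (up : bool) (x : R) l : Forall linear l ->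
  (if up then x < 0 else x <= 0) -> nb up x l = 0%nat.
Proof.
  intros Hl Hx. induction Hl as [|q l Hq _ IH]; auto. rewrite nb_cons, IH; unfold tie.
  destruct (linear_facts q Hq) as [_ [_ [_ [_ R0]]]].
  destruct up; [destruct Rle_dec | destruct Rlt_dec]; lra || lia.
Qed.

Lemma roots_perm p qs qs' : Forall linear qs -> Forall linear qs' ->
  hprodn qs p -> hprodn qs' p -> Permutation (map root qs) (map root qs').
Proof.
  intros L L' H H'. apply (Permutation_count_occ Req_dec_T). intro x.
  destruct (factorization_tops qs p L H) as [T T0].
  destruct (factorization_tops qs' p L' H') as [T' T0'].
  assert (Eup : forall up, nb up x qs = nb up x qs').
  { intro up. destruct (Rtotal_order x 0) as [Hx|[->|Hx]].
    - destruct up; rewrite !nb_nonpos; auto; lra.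
    - destruct up; [exact (top_unique _ _ _ _ T0 T0') | rewrite !nb_nonpos; auto; lra].
    - exact (top_unique _ _ _ _ (T up x Hx) (T' up x Hx)). }
  assert (S := nb_split x qs). assert (S' := nb_split x qs').
  rewrite (Eup true), (Eup false) in S. lia.
Qed.

Lemma assoc_of_root q q' : linear q -> linear q' -> root q = root q' -> assoc q q'.
Proof.
  intros Hq Hq' E.
  destruct (linear_facts q Hq) as [Hn [P1 [Z [E0 _]]]].
  destruct (linear_facts q' Hq') as [Hn' [P1' [Z' [E0' _]]]].
  assert (Pa : 0 < q 1%nat / q' 1%nat) by (apply Rdiv_lt_0_compat; auto).
  exists (q 1%nat / q' 1%nat). split; [|split]; [unfold inT; lra | lra |].
  apply hprod_const; [lra | apply Hq |].
  intros [|[|i]].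
  - rewrite E0, E0', E. field; lra.
  - field; lra.
  - rewrite (Z (S (S i))), (Z' (S (S i))) by lia; ring.
Qed.

Lemma assoc_of_roots l l' : Forall linear l -> Forall linear l' ->
  map root l = map root l' -> Forall2 assoc l l'.
Proof.
  intros L; revert l'; induction L as [|q l Hq _ IH]; intros [|q' l'] L' E; try discriminate.
  - constructor.
  - inversion L'; inversion E; subst. constructor; auto using assoc_of_root.
Qed.

Lemma unique_factorization_linear p qs qs' : Forall linear qs -> Forall linear qs' ->
  hprodn qs p -> hprodn qs' p ->
  exists qs'', Permutation qs' qs'' /\ Forall2 assoc qs qs''.
Proof.
  intros L L' H H'.
  destruct (Permutation_map_inv _ _ (roots_perm p qs qs' L L' H H')) as [qs'' [E P]].
  exists qs''; split; auto.
  apply assoc_of_roots; auto. exact (Permutation_Forall P L').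
Qed.

(* Synthetic division of p by T + c: with d = deg p, the quotient has
   coefficients q_k = synth p c (d - k) k, i.e. q_k = max (p_(k+1), c q_(k+1))
   for k < d and q_k = 0 for k >= d. *)
Fixpoint synth (p : nat -> R) (c : R) (n k : nat) : R :=
  match n with
  | O => 0
  | S n' => Rmax (p (S k)) (c * synth p c n' (S k))
  end.

Lemma continuity_Rmax f g : continuity f -> continuity g -> continuity (fun c => Rmax (f c) (g c)).
Proof.
  intros Hf Hg x.
  apply continuity_pt_locally_ext with (f := fun c => (f c + g c + Rabs (f c - g c)) / 2) (a := 1).
  - lra.
  - intros y _; unfold Rmax, Rabs; destruct Rle_dec, Rcase_abs; lra.
  - change (fun c => (f c + g c + Rabs (f c - g c)) / 2) with
      (mult_fct (plus_fct (plus_fct f g) (comp Rabs (minus_fct f g))) (fct_cte (/ 2))).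
    apply continuity_mult; [| apply continuity_const; intros ? ?; reflexivity].
    apply continuity_plus; [apply continuity_plus; auto |].
    apply continuity_comp; [apply continuity_minus; auto | apply Rcontinuity_abs].
Qed.

Lemma synth_continuous p n k : continuity (fun c => synth p c n k).
Proof.
  revert k; induction n as [|n IH]; intro k; simpl.
  - apply continuity_const; intros ? ?; reflexivity.
  - apply continuity_Rmax; [apply continuity_const; intros ? ?; reflexivity |].
    apply (continuity_mult id); auto. apply derivable_continuous, derivable_id.
Qed.

Lemma synth_nonneg p c n k : nneg p -> 0 <= c -> 0 <= synth p c n k.
Proof.
  intros Hp Hc; destruct n as [|n]; simpl; [lra |].
  apply Rle_trans with (p (S k)); [apply Hp | apply Rmax_l].
Qed.

(* Lower bound showing that c q_0 eventually exceeds p_0. *)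
Lemma synth_lower p c m k : nneg p -> 0 <= c -> c ^ m * p (k + 1 + m)%nat <= synth p c (S m) k.
Proof.
  revert k; induction m as [|m IH]; intros k Hp Hc.
  - simpl. replace (k + 1 + 0)%nat with (S k) by lia. rewrite Rmult_1_l. apply Rmax_l.
  - change (synth p c (S (S m)) k) with (Rmax (p (S k)) (c * synth p c (S m) (S k))).
    eapply Rle_trans; [| apply Rmax_r]. simpl.
    replace (k + 1 + S m)%nat with (S k + 1 + m)%nat by lia.
    rewrite Rmult_assoc. apply Rmult_le_compat_l; auto.
Qed.

(* Every polynomial of positive degree has a tropical root c:
   c q_0 = max_(k >= 1) c^k p_k equals p_0. *)
Lemma tropical_root p d : is_poly p -> has_deg p d -> (1 <= d)%nat ->
  exists c, 0 <= c /\ c * synth p c d 0 = p 0%nat.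
Proof.
  intros Hp [Hd _] Hd1. assert (Hn := poly_nneg p Hp).
  assert (Pd : 0 < p d) by (specialize (Hn d); lra). assert (P0 := Hn 0%nat).
  set (y := p 0%nat / p d + 1).
  assert (Hy : 1 <= y).
  { unfold y. assert (0 <= p 0%nat / p d).
    { apply Rmult_le_pos; [lra | apply Rlt_le, Rinv_0_lt_compat; lra]. }
    lra. }
  assert (Hfy : p 0%nat <= y * synth p y d 0).
  { destruct d as [|m]; [lia |].
    assert (B := synth_lower p y m 0 Hn ltac:(lra)).
    replace (0 + 1 + m)%nat with (S m) in B by lia.
    assert (B2 : 1 <= y ^ m) by (apply pow_R1_Rle; lra).
    assert (B3 : y * p (S m) = p 0%nat + p (S m)) by (unfold y; field; lra).
    nra. }
  destruct (IVT_cor (fun c => c * synth p c d 0 - p 0%nat) 0 y) as [z [Hz Ez]].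
  - apply continuity_minus; [| apply continuity_const; intros ? ?; reflexivity].
    apply (continuity_mult id); [apply derivable_continuous, derivable_id | apply synth_continuous].
  - lra.
  - simpl; nra.
  - exists z; split; lra.
Qed.

Lemma hadd_Rmax a c : 0 <= c -> hadd a (Rmax c a) c.
Proof. intros Hc; split; [exact Hc |]; unfold Rmax; destruct Rle_dec; lra. Qed.

Definition quotient (p : nat -> R) (c : R) (d k : nat) : R := synth p c (d - k) k.

Lemma quotient_step p c d k : (k < d)%nat ->
  quotient p c d k = Rmax (p (S k)) (c * quotient p c d (S k)).
Proof. intros Hk. unfold quotient. replace (d - k)%nat with (S (d - S k)) by lia. reflexivity. Qed.

Lemma quotient_zero p c d k : (d <= k)%nat -> quotient p c d k = 0.
Proof. intros Hk. unfold quotient. replace (d - k)%nat with 0%nat by lia. reflexivity. Qed.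

Definition monic_linear (c : R) (i : nat) : R := match i with O => c | 1%nat => 1 | _ => 0 end.

Lemma monic_linear_linear c : 0 <= c -> linear (monic_linear c).
Proof.
  intros Hc. split; [split |].
  - intros [|[|i]]; unfold inT; simpl; lra.
  - exists 2%nat; intros [|[|i]] Hi; [lia | lia | reflexivity].
  - split; [simpl; lra |]. intros [|[|k]] Hk; [lia | lia | reflexivity].
Qed.

Lemma synthetic_division p d c : is_poly p -> has_deg p d -> 0 <= c ->
  c * synth p c d 0 = p 0%nat -> hprod (monic_linear c) (quotient p c d) p.
Proof.
  intros Hp [_ Zp] Hc Ec. assert (Hn := poly_nneg p Hp).
  split; [exact Hp |]. intros [|k].
  - simpl. unfold quotient. rewrite Nat.sub_0_r. symmetry; exact Ec.
  - apply (hsum_pad _ 1); [lia | apply Hn | |].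
    + intros [|[|j]] Hj; [lia | lia | simpl; ring].
    + exists (c * quotient p c d (S k)). simpl.
      replace (k - 0)%nat with k by lia. split; [reflexivity |]. rewrite Rmult_1_l.
      destruct (Compare_dec.le_lt_dec d k) as [h|h].
      * rewrite !quotient_zero, (Zp (S k)) by lia. split; [unfold inT |]; lra.
      * rewrite (quotient_step p c d k h). apply hadd_Rmax, Hn.
Qed.

Lemma linear_factor p d : is_poly p -> has_deg p d -> (1 <= d)%nat ->
  exists L q, linear L /\ is_poly q /\ has_deg q (d - 1) /\ hprod L q p.
Proof.
  intros Hp Hdeg Hd. destruct (tropical_root p d Hp Hdeg Hd) as [c [Hc Ec]].
  exists (monic_linear c), (quotient p c d).
  split; [apply monic_linear_linear, Hc |].
  split; [| split; [| apply synthetic_division; auto]].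
  - split; [intro k; apply synth_nonneg; auto using poly_nneg |].
    exists d; intros; apply quotient_zero; assumption.
  - split; [| intros k Hk; apply quotient_zero; lia].
    rewrite quotient_step by lia. replace (S (d - 1)) with d by lia.
    rewrite quotient_zero, Rmult_0_r, Rmax_left by (lia || apply (poly_nneg p Hp)).
    apply Hdeg.
Qed.

(* Irreducible polynomials have degree 1: otherwise they split off a linear
   factor whose cofactor has smaller but positive degree. *)
Lemma irreducible_linear p : irreducible p -> has_deg p 1.
Proof.
  intros [Hp [[k [Hk1 Hk]] Hirr]].
  destruct (zero_or_deg p Hp) as [Z | [d Hd]]; [exfalso; exact (Hk (Z k)) |].
  assert (Hkd : (k <= d)%nat).
  { destruct (Compare_dec.le_lt_dec k d) as [h|h]; auto. exfalso; apply Hk, Hd, h. }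
  destruct (Nat.eq_dec d 1) as [-> | Hne]; auto. exfalso.
  destruct (linear_factor p d Hp Hd ltac:(lia)) as [L [q [[PL DL] [Pq [Dq Hpr]]]]].
  destruct (Hirr L q PL Pq Hpr) as [A | A].
  - assert (E := deg_unique p _ _ Hd (assoc_deg p L 1 PL A DL)). lia.
  - assert (E := deg_unique p _ _ Hd (assoc_deg p q _ Pq A Dq)). lia.
Qed.

(* Polynomials of degree 1 are irreducible: one factor must be a constant. *)
Lemma linear_irreducible p : linear p -> irreducible p.
Proof.
  intros [Hp Hd]. split; [exact Hp |]. split; [exists 1%nat; split; [lia | apply Hd] |].
  intros q1 q2 P1 P2 Hpr.
  assert (N1 := poly_nneg q1 P1). assert (N2 := poly_nneg q2 P2).
  assert (H := hprod_conv _ _ _ Hpr).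
  destruct (zero_or_deg q1 P1) as [Z | [d1 D1]].
  { exfalso. apply (proj1 Hd). apply (conv_zero q1 q2 p); auto.
    intros k l; rewrite Z; ring. }
  destruct (zero_or_deg q2 P2) as [Z | [d2 D2]].
  { exfalso. apply (proj1 Hd). apply (conv_zero q1 q2 p); auto.
    intros k l; rewrite Z; ring. }
  assert (E := deg_unique p _ _ Hd (conv_deg q1 q2 p d1 d2 N1 N2 (poly_nneg p Hp) H D1 D2)).
  destruct d1 as [|d1].
  - right. exists (q1 0%nat). split; [apply N1 | split; [apply D1 |]].
    apply hprod_const; auto.
    apply (conv_const_l q1 q2 p); auto. intros k Hk; apply D1; lia.
  - assert (d2 = 0%nat) by lia; subst d2.
    left. exists (q2 0%nat). split; [apply N2 | split; [apply D2 |]].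
    apply hprod_const; auto.
    intro i; rewrite Rmult_comm. apply (conv_const_r q1 q2 p); auto. intros k Hk; apply D2; lia.
Qed.

Theorem mainTheorem5 :
  (forall p : nat -> R, is_poly p -> (irreducible p <-> has_deg p 1%nat)) /\
  unique_factorization.
Proof.
  assert (Hlin : forall q, irreducible q -> linear q).
  { intros q Hq; split; [apply Hq | apply irreducible_linear, Hq]. }
  split.
  - intros p Hp; split; [apply irreducible_linear |].
    intro Hd; apply linear_irreducible; split; assumption.
  - intros p qs qs' _ _ _ I I' H H'.
    assert (L : Forall linear qs) by exact (Forall_impl _ Hlin I).
    assert (L' : Forall linear qs') by exact (Forall_impl _ Hlin I').
    destruct (unique_factorization_linear p qs qs' L L' H H') as [qs'' [P F]].
    split; [| exists qs''; auto].
    rewrite (Forall2_length F). symmetry; apply Permutation_length, P.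
Qed.
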